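(* Let $p\in(0,1)$ and let $(\lambda_n)_{n\ge1}$ be a sequence with $\lambda_1=1$ and $0<\lambda_n\le\lambda_{n-1}$ for all $n>1$. Let $r_1,r_2,\dots$ be $\{0,1\}$-valued random variables with $\Pr(r_1=1)=p$ and, for every $n\ge2$, $\Pr(r_n=1\mid r_1,\dots,r_{n-1})=\lambda_n p+(1-\lambda_n)\bar p_{n-1}$, where $\bar p_m=\frac1m\sum_{i=1}^m r_i$. Define $\hat r_1=r_1$, $\hat r_i=\frac{r_i-(1-\lambda_i)\bar p_{i-1}}{\lambda_i}$ for $i\ge2$, and for weights $\omega_1,\dots,\omega_n>0$ let $\hat p_n=\frac{\sum_{i=1}^n\omega_i\hat r_i}{\sum_{i=1}^n\omega_i}$. Then \[\mathrm{Var}[\hat p_n]=\frac{1}{\big(\sum_{i=1}^n\omega_i\big)^2}\sum_{i=1}^n\frac{\omega_i^2}{\lambda_i^2}\Big(p(1-p)-(1-\lambda_i)^2\,\mathrm{Var}[\bar p_{i-1}]\Big),\] where the $i=1$ term is read as $\omega_1^2\,p(1-p)$ (since $1-\lambda_1=0$). *)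

From HB Require Import structures.
From mathcomp Require Import all_boot all_order all_algebra.
From mathcomp Require Import all_classical all_reals all_analysis.
Set Implicit Arguments. Unset Strict Implicit. Unset Printing Implicit Defensive.
Import Order.TTheory GRing.Theory Num.Theory.
Local Open Scope ring_scope.

(* Random variables are indexed from 1: r 1, r 2, ... (r 0 is unused). *)

(* running mean  \bar p_m = (1/m) \sum_{i=1}^m r_i  (with \bar p_0 := 0) *)
Definition barp {R : realType} {T : Type} (r : nat -> T -> R) (m : nat) : T -> R :=
  fun w => (\sum_(1 <= i < m.+1) r i w) / m%:R.

Definition rhat {R : realType} {T : Type} (lam : nat -> R) (r : nat -> T -> R)
  (i : nat) : T -> R :=
  fun w => if i == 1%N then r 1%N w
           else (r i w - (1 - lam i) * barp r i.-1 w) / lam i.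

Definition phat {R : realType} {T : Type} (lam : nat -> R) (r : nat -> T -> R)
  (om : nat -> R) (n : nat) : T -> R :=
  fun w => (\sum_(1 <= i < n.+1) om i * rhat lam r i w) / (\sum_(1 <= i < n.+1) om i).

Definition history {R : realType} {T : Type} (r : nat -> T -> R) (n : nat)
  (h : nat -> R) : set T :=
  [set w | forall i, (1 <= i < n)%N -> r i w = h i].

(* Let q_k = lam_k p + (1 - lam_k) pbar_{k-1}, the conditional probability of
   r_k = 1 given r_1, ..., r_{k-1}.  Because r_k is {0,1}-valued, this gives
   E[r_k G] = E[q_k G] for every G that is a function of r_1, ..., r_{k-1}:
   both sides agree on each cell {r_i = h_i, i < k}, and the cells are glued
   back together one coordinate at a time.  Hence the innovations
   D_k = (r_k - q_k) / lam_k are centred and pairwise orthogonal.  Since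
   rhat_k = D_k + p, the estimator phat_n is p plus (sum_i w_i D_i) / W, so its
   variance is W^-2 sum_i w_i^2 E[D_i^2].  Finally
   lam_k^2 E[D_k^2] = E[(r_k - q_k)^2] = E[q_k (1 - q_k)] = p (1 - p) - Var q_k,
   because E q_k = p, and Var q_k = (1 - lam_k)^2 Var pbar_{k-1}. *)

From HB Require Import structures.
From mathcomp Require Import all_boot all_order all_algebra.
From mathcomp Require Import all_classical all_reals all_analysis.
From mathcomp Require Import ring.
Import Order.TTheory GRing.Theory Num.Theory.
Local Open Scope ring_scope.
Local Open Scope classical_set_scope.

Section bounded_mfun.
Context {R : realType} {d : measure_display} {T : measurableType d}.

(* Every random variable below is a polynomial in the bounded r_k, so bounded
   measurable functions give integrability of all of them at once. *)
Definition bounded_mfun (f : T -> R) :=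
  measurable_fun setT f /\ exists M : R, forall w, `|f w| <= M.

Lemma eq_bounded_mfun {f g : T -> R} : bounded_mfun f -> f =1 g -> bounded_mfun g.
Proof. by move=> bf /funext <-. Qed.

Lemma bounded_mfun_cst (c : R) : bounded_mfun (fun _ => c).
Proof. by split; [exact: measurable_cst | exists `|c|]. Qed.

Lemma bounded_mfunD {f g : T -> R} : bounded_mfun f -> bounded_mfun g ->
  bounded_mfun (fun w => f w + g w).
Proof.
move=> [mf [M fM]] [mg [N gN]]; split; first exact: measurable_realfun.measurable_funD.
by exists (M + N) => w; rewrite (le_trans (ler_normD _ _)) ?lerD.
Qed.

Lemma bounded_mfunM {f g : T -> R} : bounded_mfun f -> bounded_mfun g ->
  bounded_mfun (fun w => f w * g w).
Proof.
move=> [mf [M fM]] [mg [N gN]]; split; first exact: measurable_realfun.measurable_funM.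
by exists (M * N) => w; rewrite normrM ler_pM.
Qed.

Lemma bounded_mfunN {f : T -> R} : bounded_mfun f -> bounded_mfun (fun w => - f w).
Proof.
move=> bf; apply: eq_bounded_mfun (bounded_mfunM (bounded_mfun_cst (-1)) bf) _.
by move=> w; rewrite mulN1r.
Qed.

Lemma bounded_mfunB {f g : T -> R} : bounded_mfun f -> bounded_mfun g ->
  bounded_mfun (fun w => f w - g w).
Proof. by move=> bf bg; apply: bounded_mfunD bf (bounded_mfunN bg). Qed.

Lemma bounded_mfunX {f : T -> R} n : bounded_mfun f -> bounded_mfun (fun w => f w ^+ n).
Proof.
move=> bf; elim: n => [|n IH].
  by apply: eq_bounded_mfun (bounded_mfun_cst 1) _ => w; rewrite expr0.
by apply: eq_bounded_mfun (bounded_mfunM bf IH) _ => w; rewrite exprS.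
Qed.

Lemma bounded_mfun_sum {F : nat -> T -> R} {a b : nat} :
  (forall i, (a <= i < b)%N -> bounded_mfun (F i)) ->
  bounded_mfun (fun w => \sum_(a <= i < b) F i w).
Proof.
move=> bF; rewrite -fct_sumE big_nat_cond.
by apply: big_ind => [|f g|i /andP[/bF]]; [exact: bounded_mfun_cst | exact: bounded_mfunD |].
Qed.

Lemma bounded_mfun_indic {A : set T} : measurable A -> bounded_mfun (\1_A : T -> R).
Proof.
move=> mA; split; first exact: measurable_realfun.measurable_indic.
by exists 1 => w; rewrite /indic; case: (_ \in _); rewrite ?normr1 ?normr0.
Qed.

End bounded_mfun.

#[local] Hint Resolve bounded_mfun_cst bounded_mfunD bounded_mfunM bounded_mfunN
  bounded_mfunB bounded_mfunX : core.

Section mean.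
Context {R : realType} {d : measure_display} {T : measurableType d}.
Variable P : probability T R.

Definition mean (f : T -> R) : R := fine ('E_P[f])%E.

Lemma bounded_mfun_Lfun1 {f : T -> R} : bounded_mfun f -> f \in Lfun P 1.
Proof.
move=> [mf [M fM]]; apply/Lfun1_integrable/measurable_bounded_integrable => //.
  by rewrite (le_lt_trans (probability_le1 P measurableT)) ?ltry.
exists M; split; first exact: num_real.
by move=> x Mx y _; apply: le_trans (fM y) (ltW Mx).
Qed.

Lemma expectation_mean {f : T -> R} : bounded_mfun f -> ('E_P[f] = (mean f)%:E)%E.
Proof. by move=> /bounded_mfun_Lfun1 f1; rewrite fineK ?expectation_fin_num. Qed.

Lemma mean_cst (c : R) : mean (fun _ => c) = c.
Proof. by rewrite /mean (expectation_cst P c). Qed.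

Lemma meanD (f g : T -> R) : bounded_mfun f -> bounded_mfun g ->
  mean (fun w => f w + g w) = mean f + mean g.
Proof.
move=> bf bg; rewrite /mean (expectationD (bounded_mfun_Lfun1 bf) (bounded_mfun_Lfun1 bg)).
by rewrite (expectation_mean bf) (expectation_mean bg).
Qed.

Lemma meanZ (c : R) (f : T -> R) : bounded_mfun f -> mean (fun w => c * f w) = c * mean f.
Proof.
move=> bf; have -> : (fun w => c * f w) = c \o* f by apply/funext => w /=; rewrite mulrC.
by rewrite /mean (expectationZl c (bounded_mfun_Lfun1 bf)) (expectation_mean bf).
Qed.

Lemma meanN (f : T -> R) : bounded_mfun f -> mean (fun w => - f w) = - mean f.
Proof.
move=> bf; rewrite -mulN1r -meanZ //; congr mean.
by apply/funext => w; rewrite mulN1r.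
Qed.

Lemma meanB (f g : T -> R) : bounded_mfun f -> bounded_mfun g ->
  mean (fun w => f w - g w) = mean f - mean g.
Proof. by move=> bf bg; rewrite meanD ?meanN; auto. Qed.

Lemma mean_sum (F : nat -> T -> R) a b :
  (forall i, (a <= i < b)%N -> bounded_mfun (F i)) ->
  mean (fun w => \sum_(a <= i < b) F i w) = \sum_(a <= i < b) mean (F i).
Proof.
elim: b => [|b IH] bF.
  by rewrite big_geq // -[RHS](mean_cst 0); congr mean; apply/funext => w; rewrite big_geq.
have [ab|ba] := leqP a b; last first.
  rewrite big_geq ?(ltnW ba) // -[RHS](mean_cst 0); congr mean.
  by apply/funext => w; rewrite big_geq ?(ltnW ba).
have bF' i : (a <= i < b)%N -> bounded_mfun (F i).
  by move=> /andP[ai ib]; apply: bF; rewrite ai ltnW.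
have bFb : bounded_mfun (F b) by apply: bF; rewrite ab leqnn.
have bS := bounded_mfun_sum bF'.
rewrite big_nat_recr //= -IH // -meanD //.
by congr mean; apply/funext => w; rewrite big_nat_recr.
Qed.

Lemma mean_indic {A : set T} : measurable A -> mean (\1_A) = fine (P A).
Proof. by move=> mA; rewrite /mean expectation_indic. Qed.

Definition var (f : T -> R) : R := mean (fun w => (f w - mean f) ^+ 2).

Lemma variance_var (f : T -> R) : bounded_mfun f -> 'V_P[f] = (var f)%:E.
Proof.
move=> bf; rewrite /variance covariance.unlock (expectation_mean bf) /=.
rewrite [X in 'E_P[X]%E](_ : _ = fun w => (f w - mean f) ^+ 2).
  by rewrite expectation_mean //; auto.
by apply/funext => w; rewrite /= expr2.
Qed.

Lemma mean_sqr (f : T -> R) : bounded_mfun f ->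
  mean (fun w => f w ^+ 2) = mean f ^+ 2 + var f.
Proof.
move=> bf; rewrite /var; set c := mean f.
have -> : (fun w => (f w - c) ^+ 2) = fun w => f w ^+ 2 + (- (2 * c) * f w + c ^+ 2).
  by apply/funext => w; ring.
by rewrite !meanD ?meanZ ?mean_cst -/c; [ring | auto ..].
Qed.

Lemma var_affine (a b : R) (f : T -> R) : bounded_mfun f ->
  var (fun w => a + b * f w) = b ^+ 2 * var f.
Proof.
move=> bf; rewrite /var meanD ?meanZ ?mean_cst; auto.
rewrite -[RHS]meanZ; auto; congr mean; apply/funext => w; ring.
Qed.

End mean.

Section binary_histories.
Context {R : realType} {d : measure_display} {T : measurableType d}.
Variables (P : probability T R) (r : nat -> {RV P >-> R}).
Hypothesis r01 : forall k w, (1 <= k)%N -> r k w = 0 \/ r k w = 1.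

(* [history r k h] is [history_from k 1 h] by conversion. *)
Definition history_from k m (h : nat -> R) : set T :=
  [set w | forall i, (m <= i < k)%N -> r i w = h i].

Lemma measurable_history_from k m h : measurable (history_from k m h).
Proof.
have -> : history_from k m h =
    \bigcap_i (if (m <= i < k)%N then r i @^-1` [set h i] else setT).
  apply/seteqP; split => w /= Hw i; last by move: (Hw i I); case: ifP.
  by case: ifP => // /Hw.
by apply: bigcapT_measurable => i; case: ifP.
Qed.

Lemma history_from_S k m h v : (m < k)%N ->
  history_from k m (fun i => if i == m then v else h i) =
  history_from k m.+1 h `&` [set w | r m w = v].
Proof.
move=> mk; apply/seteqP; split => w /=.
  move=> Hw; split; last by have := Hw m; rewrite leqnn mk eqxx; apply.
  by move=> i /andP[mi ik]; have := Hw i; rewrite ltnW // ik gtn_eqF //; apply.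
move=> [Hw rm] i /andP[mi ik]; case: eqP => [->//|/eqP im].
by apply: Hw; rewrite ik andbT ltn_neqAle eq_sym im.
Qed.

Lemma history_from_ge k m h : (k <= m)%N -> history_from k m h = setT.
Proof.
move=> km; apply/seteqP; split => // w _ i /andP[mi ik].
by have := leq_trans km mi; rewrite leqNgt ik.
Qed.

Lemma indic_binary_split m (A : set T) w : (1 <= m)%N ->
  \1_A w = \1_(A `&` [set w | r m w = 0]) w + \1_(A `&` [set w | r m w = 1]) w :> R.
Proof.
move=> m1; rewrite !indicE; have [Aw|Aw] := pselect (A w); last first.
  by rewrite !memNset ?addr0 // => -[].
rewrite mem_set //; have [] := r01 m w m1 => rm.
  rewrite (mem_set (A := _ `&` _)) // memNset ?addr0 //= rm.
  by move=> -[_ /eqP]; rewrite eq_sym oner_eq0.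
rewrite (memNset (A := _ `&` [set w | _ = 0])) ?add0r ?mem_set //= rm.
by move=> -[_ /eqP]; rewrite oner_eq0.
Qed.

Lemma eq_mean_from_histories k (X Y : T -> R) : bounded_mfun X -> bounded_mfun Y ->
  (forall h, mean P (fun w => X w * \1_(history (fun i => r i : T -> R) k h) w) =
             mean P (fun w => Y w * \1_(history (fun i => r i : T -> R) k h) w)) ->
  mean P X = mean P Y.
Proof.
move=> bX bY XYh.
have bounded_cell (Z : T -> R) m h :
    bounded_mfun Z -> bounded_mfun (fun w => Z w * \1_(history_from k m h) w).
  by move=> bZ; apply: bounded_mfunM bZ (bounded_mfun_indic (measurable_history_from _ _ _)).
suff XYm m h : mean P (fun w => X w * \1_(history_from k m.+1 h) w) =
               mean P (fun w => Y w * \1_(history_from k m.+1 h) w).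
  have := XYm k (fun=> 0); rewrite history_from_ge //.
  by congr (mean P _ = mean P _); apply/funext => w; rewrite indicT mulr1.
elim: m h => [//|m IH] h.
have [mk|km] := ltnP m.+1 k; last first.
  by move: (IH h); rewrite !history_from_ge // leqW.
have mean_split (Z : T -> R) : bounded_mfun Z ->
    mean P (fun w => Z w * \1_(history_from k m.+2 h) w) =
    mean P (fun w => Z w * \1_(history_from k m.+1 (fun i => if i == m.+1 then 0 else h i)) w)
  + mean P (fun w => Z w * \1_(history_from k m.+1 (fun i => if i == m.+1 then 1 else h i)) w).
  move=> bZ; rewrite -meanD; [congr (mean P); apply/funext => w | exact: bounded_cell ..].
  by rewrite !history_from_S // (indic_binary_split _ _ _ (ltn0Sn m)) mulrDr.
by rewrite mean_split // mean_split // !IH.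
Qed.

End binary_histories.

Section model.
Context {R : realType} {d : measure_display} {T : measurableType d}.
Variables (P : probability T R) (p : R) (lam : nat -> R) (r : nat -> {RV P >-> R}).
Hypothesis lam1 : lam 1%N = 1.
Hypothesis lam_gt0_nonincr : forall k, (1 < k)%N -> 0 < lam k <= lam k.-1.
Hypothesis r01 : forall k w, (1 <= k)%N -> r k w = 0 \/ r k w = 1.
Hypothesis prob_r1 : P [set w | r 1%N w = 1] = p%:E.
Hypothesis prob_r_history : forall k (h : nat -> R), (2 <= k)%N ->
  P (history (fun i => r i : T -> R) k h `&` [set w | r k w = 1]) =
  ((lam k * p + (1 - lam k) * ((\sum_(1 <= i < k) h i) / k.-1%:R))%:E
     * P (history (fun i => r i : T -> R) k h))%E.

Local Notation hist k h := (history (fun i => r i : T -> R) k h).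
Local Notation pbar m := (barp (fun i => r i : T -> R) m).

(* The conditional probability of [r k = 1] given the past (q_k above). *)
Definition cprob k : T -> R := fun w => lam k * p + (1 - lam k) * pbar k.-1 w.

Definition past_determined k (G : T -> R) :=
  forall w w', (forall i, (1 <= i < k)%N -> r i w = r i w') -> G w = G w'.

Lemma lam_gt0 i : (1 <= i)%N -> 0 < lam i.
Proof.
case: i => [//|[_|i _]]; first by rewrite lam1.
by case/andP: (@lam_gt0_nonincr i.+2 isT).
Qed.

Lemma bounded_mfun_r {k} : (1 <= k)%N -> bounded_mfun (r k).
Proof.
move=> k1; split; first exact: measurable_funPT.
by exists 1 => w; case: (r01 k w k1) => ->; rewrite ?normr0 ?normr1.
Qed.

Lemma bounded_mfun_pbar m : bounded_mfun (pbar m).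
Proof.
apply: bounded_mfunM (bounded_mfun_cst _).
by apply: bounded_mfun_sum => i /andP[i1 _]; exact: bounded_mfun_r.
Qed.

Lemma bounded_mfun_cprob k : bounded_mfun (cprob k).
Proof. by apply: bounded_mfunD (bounded_mfun_cst _) _; auto using bounded_mfun_pbar. Qed.

Lemma past_determined_pbar m k : (m < k)%N -> past_determined k (pbar m).
Proof.
move=> mk w w' ww'; congr (_ / _); apply: eq_big_nat => i /andP[i1 im].
by apply: ww'; rewrite i1 (leq_trans im).
Qed.

Lemma past_determined_cprob j k : (1 <= j <= k)%N -> past_determined k (cprob j).
Proof.
move=> /andP[j1 jk] w w' ww'; rewrite /cprob (@past_determined_pbar j.-1 k _ w w' ww') //.
by rewrite prednK // (leq_trans _ jk).
Qed.

Lemma prob_history_r k h : (1 <= k)%N ->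
  P (hist k h `&` [set w | r k w = 1]) =
  ((lam k * p + (1 - lam k) * ((\sum_(1 <= i < k) h i) / k.-1%:R))%:E * P (hist k h))%E.
Proof.
case: k => [//|[_|k _]]; last exact: prob_r_history.
rewrite [hist 1 h](history_from_ge P r 1 1 h (leqnn 1)) setTI prob_r1 probability_setT.
by rewrite lam1 subrr mul0r addr0 mul1r mule1.
Qed.

Lemma past_determined_indic_history {k} {G : T -> R} h : past_determined k G ->
  exists c, forall w, G w * \1_(hist k h) w = c * \1_(hist k h) w.
Proof.
move=> pG; have [[w0 Hw0]|noH] := pselect (exists w0, hist k h w0); last first.
  by exists 0 => w; rewrite indicE memNset ?mulr0 // => Hw; apply: noH; exists w.
exists (G w0) => w; rewrite indicE; have [Hw|Hw] := pselect (hist k h w).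
  by rewrite (pG w w0) // => i ik; rewrite Hw // Hw0.
by rewrite memNset ?mulr0.
Qed.

Lemma mean_r_history k h G : (1 <= k)%N -> bounded_mfun G -> past_determined k G ->
  mean P (fun w => r k w * G w * \1_(hist k h) w) =
  mean P (fun w => cprob k w * G w * \1_(hist k h) w).
Proof.
move=> k1 bG pG; have [c Gc] := past_determined_indic_history h pG.
set H := hist k h; set A := [set w | r k w = 1].
set qh := lam k * p + (1 - lam k) * ((\sum_(1 <= i < k) h i) / k.-1%:R).
have mH : measurable H by exact: measurable_history_from.
have mA : measurable A by exact: measurable_funPTI (r k) _ (measurable_set1 1).
have mHA := measurableI _ _ mH mA.
have rH w : r k w * \1_H w = \1_(H `&` A) w.
  rewrite !indicE; have [Hw|Hw] := pselect (H w); last first.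
    by rewrite (memNset Hw) mulr0 memNset // => -[/Hw].
  rewrite mem_set //; have [] := r01 k w k1 => rkw; last by rewrite rkw mul1r mem_set.
  by rewrite rkw mul0r memNset // => -[_]; rewrite /A /= rkw => /eqP; rewrite eq_sym oner_eq0.
have qH w : cprob k w * \1_H w = qh * \1_H w.
  rewrite indicE; have [Hw|Hw] := pselect (H w); last by rewrite memNset ?mulr0.
  rewrite mem_set // /cprob /barp /qh prednK //; congr ((_ + _ * (_ / _)) * _).
  by apply: eq_big_nat => i /Hw.
have -> : (fun w => r k w * G w * \1_H w) = fun w => c * \1_(H `&` A) w.
  by apply/funext => w; rewrite -mulrA Gc mulrCA rH.
have -> : (fun w => cprob k w * G w * \1_H w) = fun w => (c * qh) * \1_H w.
  by apply/funext => w; rewrite -mulrA Gc mulrCA qH mulrA.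
rewrite !meanZ ?mean_indic ?prob_history_r //; [|exact: bounded_mfun_indic ..].
by rewrite -mulrA fineM // fin_num_measure.
Qed.

Lemma mean_r_mul_past k G : (1 <= k)%N -> bounded_mfun G -> past_determined k G ->
  mean P (fun w => r k w * G w) = mean P (fun w => cprob k w * G w).
Proof.
move=> k1 bG pG; apply: (eq_mean_from_histories _ _ r01 k) => [||h].
- by apply: bounded_mfunM bG; exact: bounded_mfun_r.
- by apply: bounded_mfunM bG; exact: bounded_mfun_cprob.
- exact: mean_r_history.
Qed.

Lemma mean_r_sub_cprob_mul_past k G : (1 <= k)%N -> bounded_mfun G -> past_determined k G ->
  mean P (fun w => (r k w - cprob k w) * G w) = 0.
Proof.
move=> k1 bG pG; rewrite (_ : (fun w => _) = fun w => r k w * G w - cprob k w * G w).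
  by rewrite meanB ?mean_r_mul_past ?subrr //; auto using bounded_mfun_r, bounded_mfun_cprob.
by apply/funext => w; rewrite mulrBl.
Qed.

Lemma mean_cprobE k : mean P (cprob k) = lam k * p + (1 - lam k) * mean P (pbar k.-1).
Proof.
have bp := bounded_mfun_pbar k.-1.
by rewrite meanD ?meanZ ?mean_cst //; exact: bounded_mfunM (bounded_mfun_cst _) bp.
Qed.

Lemma mean_pbar m : mean P (pbar m) = (\sum_(1 <= i < m.+1) mean P (r i)) / m%:R.
Proof.
have br i : (1 <= i < m.+1)%N -> bounded_mfun (r i) by case/andP=> i1 _; exact: bounded_mfun_r.
rewrite (_ : pbar m = fun w => m%:R^-1 * \sum_(1 <= i < m.+1) r i w).
  by rewrite meanZ ?mean_sum 1?mulrC //; exact: bounded_mfun_sum.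
by apply/funext => w; rewrite /barp mulrC.
Qed.

Lemma mean_r_cprob k : (1 <= k)%N -> mean P (r k) = mean P (cprob k).
Proof.
move=> k1; have := mean_r_mul_past _ _ k1 (bounded_mfun_cst 1) (fun _ _ _ => erefl).
by congr (_ = _); congr (mean P); apply/funext => w; rewrite mulr1.
Qed.

Lemma mean_r k : (1 <= k)%N -> mean P (r k) = p.
Proof.
elim/ltn_ind: k => k IH k1.
rewrite mean_r_cprob // mean_cprobE; have [k2|k_le1] := ltnP 1 k; last first.
  have -> : k = 1%N by apply/anti_leq; rewrite k_le1.
  by rewrite lam1 subrr mul0r addr0 mul1r.
rewrite mean_pbar prednK 1?ltnW // (eq_big_nat _ _ (F2 := fun=> p)); last first.
  by move=> i /andP[i1 ik]; apply: IH.
rewrite sumr_const_nat subn1 -[p *+ _]mulr_natr mulfK ?pnatr_eq0 -?lt0n ?ltn_predRL //.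
by rewrite mulrBl mul1r addrC subrK.
Qed.

Lemma mean_cprob k : (1 <= k)%N -> mean P (cprob k) = p.
Proof. by move=> k1; rewrite -mean_r_cprob ?mean_r. Qed.

Lemma var_cprob k : var P (cprob k) = (1 - lam k) ^+ 2 * var P (pbar k.-1).
Proof. exact/var_affine/bounded_mfun_pbar. Qed.

Lemma mean_sqr_r_sub_cprob k : (1 <= k)%N ->
  mean P (fun w => (r k w - cprob k w) ^+ 2) = p * (1 - p) - (1 - lam k) ^+ 2 * var P (pbar k.-1).
Proof.
move=> k1; have bq := bounded_mfun_cprob k; have br := bounded_mfun_r k1.
have bG : bounded_mfun (fun w => 1 - 2 * cprob k w) by auto.
have pG : past_determined k (fun w => 1 - 2 * cprob k w).
  by move=> w w' ww'; rewrite (@past_determined_cprob k k _ w w' ww') ?k1 ?leqnn.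
have -> : (fun w => (r k w - cprob k w) ^+ 2) =
          fun w => r k w * (1 - 2 * cprob k w) + cprob k w ^+ 2.
  apply/funext => w; have [] := r01 k w k1 => ->; ring.
rewrite meanD ?mean_r_mul_past -?meanD; auto.
have -> : (fun w => cprob k w * (1 - 2 * cprob k w) + cprob k w ^+ 2) =
          fun w => cprob k w - cprob k w ^+ 2.
  by apply/funext => w; ring.
by rewrite meanB ?mean_sqr ?mean_cprob ?var_cprob; [ring | auto ..].
Qed.

Definition innov k : T -> R := fun w => (r k w - cprob k w) / lam k.

Definition innov_sum (om : nat -> R) n : T -> R :=
  fun w => \sum_(1 <= i < n.+1) om i * innov i w.

Lemma bounded_mfun_innov {k} : (1 <= k)%N -> bounded_mfun (innov k).
Proof.
move=> k1; apply: bounded_mfunM (bounded_mfun_cst _).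
exact: bounded_mfunB (bounded_mfun_r k1) (bounded_mfun_cprob k).
Qed.

Lemma bounded_mfun_innov_sum om n : bounded_mfun (innov_sum om n).
Proof.
apply: bounded_mfun_sum => i /andP[i1 _].
exact: bounded_mfunM (bounded_mfun_cst _) (bounded_mfun_innov i1).
Qed.

Lemma past_determined_innov_sum om {n k} : (n < k)%N -> past_determined k (innov_sum om n).
Proof.
move=> nk w w' ww'; apply: eq_big_nat => i /andP[i1 ik]; have ik' := leq_trans ik nk.
by rewrite /innov ww' ?i1 // (@past_determined_cprob i k _ w w' ww') // i1 ltnW.
Qed.

Lemma mean_innov_mul_past {k G} : (1 <= k)%N -> bounded_mfun G -> past_determined k G ->
  mean P (fun w => innov k w * G w) = 0.
Proof.
move=> k1 bG pG; rewrite -(mean_r_sub_cprob_mul_past k (fun w => G w / lam k)) //.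
- by congr (mean P); apply/funext => w; rewrite /innov mulrAC mulrA.
- exact: bounded_mfunM bG (bounded_mfun_cst _).
- by move=> w w' ww'; rewrite (pG w w').
Qed.

Lemma mean_sqr_innov k : (1 <= k)%N -> mean P (fun w => innov k w ^+ 2) =
  (p * (1 - p) - (1 - lam k) ^+ 2 * var P (pbar k.-1)) / lam k ^+ 2.
Proof.
move=> k1; rewrite -mean_sqr_r_sub_cprob // mulrC -meanZ; last first.
  exact: bounded_mfunX (bounded_mfunB (bounded_mfun_r k1) (bounded_mfun_cprob k)).
by congr (mean P); apply/funext => w; rewrite /innov exprMn exprVn mulrC.
Qed.

Lemma mean_innov k : (1 <= k)%N -> mean P (innov k) = 0.
Proof.
move=> k1; rewrite -(mean_innov_mul_past (G := fun=> 1) k1) //.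
by congr (mean P); apply/funext => w; rewrite mulr1.
Qed.

Lemma mean_innov_sum om n : mean P (innov_sum om n) = 0.
Proof.
rewrite mean_sum => [|i /andP[i1 _]]; last first.
  exact: bounded_mfunM (bounded_mfun_cst _) (bounded_mfun_innov i1).
rewrite big_nat big1 // => i /andP[i1 _].
by rewrite meanZ ?mean_innov ?mulr0 //; exact: bounded_mfun_innov.
Qed.

Lemma mean_sqr_innov_sum om n : mean P (fun w => innov_sum om n w ^+ 2) =
  \sum_(1 <= i < n.+1) om i ^+ 2 * mean P (fun w => innov i w ^+ 2).
Proof.
elim: n => [|n IH].
  rewrite big_geq // -[RHS](mean_cst P); congr (mean P).
  by apply/funext => w; rewrite /innov_sum big_geq // expr0n.
have bS := bounded_mfun_innov_sum om n; have bI := bounded_mfun_innov (ltn0Sn n).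
have -> : (fun w => innov_sum om n.+1 w ^+ 2) = fun w => innov_sum om n w ^+ 2 +
    (2 * om n.+1 * (innov n.+1 w * innov_sum om n w) + om n.+1 ^+ 2 * innov n.+1 w ^+ 2).
  by apply/funext => w; rewrite /innov_sum big_nat_recr //=; ring.
have orth := mean_innov_mul_past (ltn0Sn n) bS (past_determined_innov_sum om (ltnSn n)).
rewrite [in RHS]big_nat_recr //= -IH.
by rewrite meanD ?meanD ?meanZ ?orth ?mulr0 ?add0r; auto.
Qed.

Lemma var_innov_sum om n : var P (innov_sum om n) =
  \sum_(1 <= i < n.+1) om i ^+ 2 * mean P (fun w => innov i w ^+ 2).
Proof.
have := mean_sqr P _ (bounded_mfun_innov_sum om n).
by rewrite mean_innov_sum mean_sqr_innov_sum expr0n add0r.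
Qed.

Lemma rhat_innov k w : (1 <= k)%N ->
  rhat lam (fun i => r i : T -> R) k w = innov k w + p.
Proof.
move=> k1; rewrite /rhat /innov /cprob; case: eqP => [->|_].
  by rewrite lam1 subrr mul0r addr0 mul1r divr1 subrK.
by field; rewrite gt_eqF // lam_gt0.
Qed.

(* The constant is written p W / W rather than p so that no W != 0 is needed. *)
Lemma phat_innov_sum om n w :
  phat lam (fun i => r i : T -> R) om n w =
  p * (\sum_(1 <= i < n.+1) om i) / (\sum_(1 <= i < n.+1) om i)
  + (\sum_(1 <= i < n.+1) om i)^-1 * innov_sum om n w.
Proof.
rewrite /phat /innov_sum addrC [X in X + _]mulrC -mulrDl mulr_sumr -big_split /=.
congr (_ / _); apply: eq_big_nat => i /andP[i1 _].
by rewrite rhat_innov // mulrDr [p * _]mulrC.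
Qed.

Lemma variance_phat om n :
  'V_P[phat lam (fun i => r i : T -> R) om n] =
  (((\sum_(1 <= i < n.+1) om i) ^+ 2)^-1%:E *
   \sum_(1 <= i < n.+1)
     ((om i ^+ 2 / lam i ^+ 2)%:E *
      ((p * (1 - p))%:E
       - ((1 - lam i) ^+ 2)%:E * 'V_P[barp (fun j => r j : T -> R) i.-1])))%E.
Proof.
have bS := bounded_mfun_innov_sum om n.
rewrite (funext (phat_innov_sum om n)) variance_var; last auto.
rewrite var_affine // var_innov_sum exprVn EFinM -sumEFin; congr (_ * _)%E.
apply: eq_big_nat => i /andP[i1 _].
rewrite mean_sqr_innov // variance_var; last exact: bounded_mfun_pbar.
by rewrite -EFinM mulrA mulrAC.
Qed.

End model.

Theorem theoremA13 (R : realType) (d : measure_display) (T : measurableType d)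
  (P : probability T R) (p : R) (lam : nat -> R) (r : nat -> {RV P >-> R})
  (om : nat -> R) (n : nat) :
  0 < p < 1 ->
  lam 1%N = 1 ->
  (forall k, (1 < k)%N -> 0 < lam k <= lam k.-1) ->
  (forall k w, (1 <= k)%N -> r k w = 0 \/ r k w = 1) ->
  P [set w | r 1%N w = 1] = p%:E ->
  (forall k (h : nat -> R), (2 <= k)%N ->
     P (history (fun i => r i : T -> R) k h `&` [set w | r k w = 1]) =
     ((lam k * p + (1 - lam k) * ((\sum_(1 <= i < k) h i) / k.-1%:R))%:E
        * P (history (fun i => r i : T -> R) k h))%E) ->
  (forall i, (1 <= i <= n)%N -> 0 < om i) ->
  'V_P[phat lam (fun i => r i : T -> R) om n] =
  (((\sum_(1 <= i < n.+1) om i) ^+ 2)^-1%:E *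
   \sum_(1 <= i < n.+1)
     ((om i ^+ 2 / lam i ^+ 2)%:E *
      ((p * (1 - p))%:E
       - ((1 - lam i) ^+ 2)%:E * 'V_P[barp (fun j => r j : T -> R) i.-1])))%E.
Proof.
move=> _ lam1 lam_gt0_nonincr r01 prob_r1 prob_r_history _.
exact: variance_phat.
Qed.
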